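(* Let $h$ be an interaction anchored in $X$ and $h'$ an interaction anchored in $X'$. Assume that $\sum_{x\in X}\sum_{x'\in X'}f(1+|x-x'|)<\infty$ for every $f\in\mathcal F$. Then the commutator interaction $[h,h']$ is summable; in fact $\sum_S\|[h,h']_S\|<\infty$.
   Context: $\mathcal A$ is the quasi-local $C^*$-algebra on $\mathbb Z^2$ with on-site $M_d(\mathbb C)$, with local subalgebras $\mathcal A_S$ and $\ell^\infty$ distances and diameters; $|x-x'|$ is the $\ell^\infty$ distance. $\mathcal F$ is the set of strictly positive non-increasing $f:\{1,2,\dots\}\to(0,\infty)$ with $r^pf(r)\to0$ for all $p$. An interaction $h$ assigns $h_S\in\mathcal A_S$ to finite $S$. $\|h\|_f=\sup_x\sum_{S\ni x}\|h_S\|/f(1+\mathrm{diam}S)$, and $\mathcal J$ is the set of interactions with some finite $\|h\|_f$. $h$ is anchored in $X$ if $h\in\mathcal J$ and $h_S=0$ whenever $S\cap X=\emptyset$. The commutator is $[h,h']_S=\sum_{S_1\cup S_2=S,\,S_1\cap S_2\ne\emptyset}[h_{S_1},h'_{S_2}]$. An interaction is summable if $\sum_S h_S$ converges in norm. *)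

From HB Require Import structures.
From mathcomp Require Import all_boot all_order all_algebra.
From mathcomp Require Import finmap.
From mathcomp Require Import all_classical all_reals all_analysis.
From mathcomp Require Import complex.
Set Implicit Arguments. Unset Strict Implicit. Unset Printing Implicit Defensive.
Import Order.TTheory GRing.Theory Num.Theory.
Local Open Scope ring_scope.
Local Open Scope classical_set_scope.
Import numFieldNormedType.Exports.

Definition site := (int * int)%type.

Definition ldist (x y : site) : nat := maxn (absz (x.1 - y.1)) (absz (x.2 - y.2)).

(* l^infinity diameter of a finite set (0 for the empty set) *)
Definition diam (S : {fset site}) : nat :=
  (\max_(x : S) \max_(y : S) ldist (val x) (val y))%N.

Section Local.
Variables (R : realType) (d : nat).
Local Notation C := (complex.complex R).

(* basis configurations of the sites in S: the local Hilbert space is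
   (C^d)^{\otimes S} = functions conf S -> C *)
Definition conf (S : {fset site}) := {ffun S -> 'I_d}.

(* local algebra A_S = M_d(C)^{\otimes S}, as kernels (matrices) on conf S *)
Definition obs (S : {fset site}) := {ffun conf S * conf S -> C}.

Definition mulo S (a b : obs S) : obs S :=
  [ffun p => \sum_(r : conf S) a (p.1, r) * b (r, p.2)].

Definition commo S (a b : obs S) : obs S := mulo a b - mulo b a.

Definition apply_obs S (a : obs S) (v : {ffun conf S -> C}) : {ffun conf S -> C} :=
  [ffun s => \sum_(t : conf S) a (s, t) * v t].

Definition cabs (z : C) : R := Num.sqrt (complex.Re z ^+ 2 + complex.Im z ^+ 2).

Definition vnorm S (v : {ffun conf S -> C}) : R :=
  Num.sqrt (\sum_(s : conf S) cabs (v s) ^+ 2).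

(* C*-norm = operator norm on the local Hilbert space *)
Definition opnorm S (a : obs S) : R :=
  sup [set vnorm (apply_obs a v) | v in [set v : {ffun conf S -> C} | vnorm v <= 1]].

(* embedding A_S -> A_T for S ⊆ T : a |-> a ⊗ 1_{T \ S} *)
Definition restr S T (H : (S `<=` T)%fset) (s : conf T) : conf S :=
  [ffun x : S => s (fincl H x)].

Definition agree_off (S T : {fset site}) (s t : conf T) : bool :=
  [forall x : T, (val x \notin S) ==> (s x == t x)].

Definition embH S T (H : (S `<=` T)%fset) (a : obs S) : obs T :=
  [ffun p => a (restr H p.1, restr H p.2) * (agree_off S p.1 p.2)%:R].

(* total version (0 when S is not contained in T; only used with S ⊆ T) *)
Definition emb S T (a : obs S) : obs T :=
  match @idP (S `<=` T)%fset with
  | ReflectT H => embH H a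
  | ReflectF _ => 0
  end.

Definition interaction := forall S : {fset site}, obs S.

Definition inF (f : nat -> R) : Prop :=
  [/\ (forall r, (0 < r)%N -> 0 < f r),
      (forall r s, (0 < r)%N -> (r <= s)%N -> f s <= f r) &
      (forall p : nat, (fun r : nat => r%:R ^+ p * f r) @ \oo --> (0 : R))].

Definition fsum (f : nat -> R) (h : interaction) (x : site) : \bar R :=
  \esum_(S in [set S : {fset site} | x \in S]) ((opnorm (h S) / f (1 + diam S)%N)%:E).

Definition inJ (h : interaction) : Prop :=
  exists f, inF f /\ exists M : R, forall x, (fsum f h x <= M%:E)%E.

Definition anchored (X : set site) (h : interaction) : Prop :=
  inJ h /\ forall S : {fset site}, (forall x, x \in S -> ~ X x) -> h S = 0.

Definition comm_int (h h' : interaction) : interaction := fun S =>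
  \sum_(S1 <- fpowerset S)
    \sum_(S2 <- fpowerset S | ((S1 `|` S2)%fset == S) && ((S1 `&` S2)%fset != fset0))
      commo (emb S (h S1)) (emb S (h' S2)).

End Local.

From Pilot Require Import Defs.
From HB Require Import structures.
From mathcomp Require Import all_boot all_order all_algebra.
From mathcomp Require Import finmap.
From mathcomp Require Import all_classical all_reals all_analysis.
From mathcomp Require Import complex.
From mathcomp Require Import lra ring zify.
Import Order.TTheory GRing.Theory Num.Theory.
Local Open Scope ring_scope.
Set Implicit Arguments. Unset Strict Implicit. Unset Printing Implicit Defensive.
Import numFieldNormedType.Exports.
Local Open Scope classical_set_scope.

(* Expanding the commutator, ||[h,h']_S|| <= 2 sum ||h_S1|| ||h'_S2|| over the pairs
   S1 `|` S2 = S with S1 `&` S2 nonempty, and every such pair occurs for exactly one S.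
   Charging an overlapping pair to a common site z, and each set to one of its anchor
   sites x in X (resp. x' in X'), the finite f- and f'-norms of h and h' bound the total by
   2 M M' sum_(x, x') sum_z f(1 + |x - z|) f'(1 + |x' - z|).  One of |x - z|, |x' - z| is
   at least |x - x'| / 2, and f, f' are summable over Z^2, so the z-sum is at most
   g(1 + |x - x'|) for a weight g that is again in F; the hypothesis applied to g
   bounds what is left. *)

Section CauchySchwarz.
Variables (R : rcfType) (I : finType).
Implicit Types x y : I -> R.

Lemma sum_sqr_ge0 x : 0 <= \sum_i x i ^+ 2.
Proof. by apply: sumr_ge0 => i _; exact: sqr_ge0. Qed.

Lemma cauchy_schwarz_sqr x y :
  (\sum_i x i * y i) ^+ 2 <= (\sum_i x i ^+ 2) * (\sum_i y i ^+ 2).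
Proof.
have double_sum (F G : I -> R) :
    \sum_i \sum_j F i * G j = (\sum_i F i) * (\sum_j G j).
  by rewrite big_distrl; apply: eq_bigr => i _; rewrite big_distrr.
have lagrange : \sum_i \sum_j (x i * y j - x j * y i) ^+ 2 =
    2 * ((\sum_i x i ^+ 2) * (\sum_i y i ^+ 2) - (\sum_i x i * y i) ^+ 2).
  transitivity (\sum_i \sum_j (x i ^+ 2 * y j ^+ 2) + \sum_i \sum_j (y i ^+ 2 * x j ^+ 2)
      - 2 * \sum_i \sum_j ((x i * y i) * (x j * y j))).
    rewrite mulr_sumr -!big_split -sumrB /=; apply: eq_bigr => i _.
    by rewrite mulr_sumr -!big_split -sumrB /=; apply: eq_bigr => j _; ring.
  rewrite !double_sum; ring.
have : 0 <= \sum_i \sum_j (x i * y j - x j * y i) ^+ 2.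
  by apply: sumr_ge0 => i _; apply: sumr_ge0 => j _; exact: sqr_ge0.
rewrite lagrange => ?; lra.
Qed.

Lemma cauchy_schwarz x y :
  \sum_i x i * y i <= Num.sqrt (\sum_i x i ^+ 2) * Num.sqrt (\sum_i y i ^+ 2).
Proof.
rewrite -sqrtrM ?sum_sqr_ge0 //; apply: le_trans (ler_norm _) _.
by rewrite -sqrtr_sqr ler_wsqrtr // cauchy_schwarz_sqr.
Qed.

Lemma minkowski x y :
  Num.sqrt (\sum_i (x i + y i) ^+ 2) <=
  Num.sqrt (\sum_i x i ^+ 2) + Num.sqrt (\sum_i y i ^+ 2).
Proof.
have cs := cauchy_schwarz x y.
rewrite -[X in _ <= X]ger0_norm ?addr_ge0 ?sqrtr_ge0 // -sqrtr_sqr ler_wsqrtr //.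
have -> : \sum_i (x i + y i) ^+ 2 =
    \sum_i x i ^+ 2 + 2 * \sum_i x i * y i + \sum_i y i ^+ 2.
  by rewrite mulr_sumr -!big_split /=; apply: eq_bigr => i _; ring.
rewrite sqrrD !sqr_sqrtr ?sum_sqr_ge0 //; lra.
Qed.

End CauchySchwarz.

Section HilbertNorm.
Variables (R : realType) (d : nat).
Local Notation C := (complex R).

Lemma cabsE (z : C) : cabs z = Normc.normc z.
Proof. by case: z. Qed.

Lemma cabs_ge0 (z : C) : 0 <= cabs z.
Proof. exact: sqrtr_ge0. Qed.

Lemma cabsM (z w : C) : cabs (z * w) = cabs z * cabs w.
Proof. by rewrite !cabsE Normc.normcM. Qed.

Lemma ler_cabsD (z w : C) : cabs (z + w) <= cabs z + cabs w.
Proof. by rewrite !cabsE le_normcD. Qed.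

Lemma cabs0 : cabs (0 : C) = 0.
Proof. by rewrite cabsE Normc.normc0. Qed.

Lemma cabsN1 : cabs (-1 : C) = 1.
Proof. by rewrite cabsE normcN Normc.normc1. Qed.

Lemma cabs_real (r : R) : 0 <= r -> cabs (r%:C)%C = r.
Proof. by move=> r0; rewrite /cabs /= expr0n addr0 sqrtr_sqr ger0_norm. Qed.

Variable S : {fset site}.
Implicit Types v w : {ffun conf d S -> C}.

Lemma vnorm_ge0 v : 0 <= vnorm v.
Proof. exact: sqrtr_ge0. Qed.

Lemma vnorm_sqr v : vnorm v ^+ 2 = \sum_s cabs (v s) ^+ 2.
Proof. by rewrite sqr_sqrtr // sum_sqr_ge0. Qed.

Lemma vnorm0 : vnorm (0 : {ffun conf d S -> C}) = 0.
Proof. by rewrite /vnorm big1 ?sqrtr0 // => s _; rewrite ffunE cabs0 expr0n. Qed.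

Lemma vnormD v w : vnorm (v + w) <= vnorm v + vnorm w.
Proof.
apply: le_trans (minkowski (fun s => cabs (v s)) (fun s => cabs (w s))).
rewrite ler_wsqrtr // ler_sum // => s _; rewrite ffunE.
by rewrite ler_sqr ?nnegrE ?cabs_ge0 ?addr_ge0 ?cabs_ge0 // ler_cabsD.
Qed.

Lemma vnormZ (z : C) v : vnorm [ffun s => z * v s] = cabs z * vnorm v.
Proof.
rewrite /vnorm -[cabs z]ger0_norm ?cabs_ge0 // -sqrtr_sqr -sqrtrM ?sqr_ge0 //.
by rewrite mulr_sumr; congr Num.sqrt; apply: eq_bigr => s _; rewrite ffunE cabsM exprMn.
Qed.

Lemma cabs_le_vnorm v t : cabs (v t) <= vnorm v.
Proof.
rewrite -[cabs _]ger0_norm ?cabs_ge0 // -sqrtr_sqr ler_wsqrtr //.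
by rewrite (bigD1 t) //= lerDl sumr_ge0 // => i _; exact: sqr_ge0.
Qed.

Lemma vnorm_sum (J : Type) (r : seq J) (P : pred J) (F : J -> {ffun conf d S -> C}) :
  vnorm (\sum_(j <- r | P j) F j) <= \sum_(j <- r | P j) vnorm (F j).
Proof.
elim/big_ind2: _ => [|v1 x1 v2 x2 le1 le2|//]; first by rewrite vnorm0.
by apply: le_trans (vnormD _ _) _; exact: lerD.
Qed.

End HilbertNorm.

Section OperatorNorm.
Variables (R : realType) (d : nat) (S : {fset site}).
Local Notation C := (complex R).
Local Notation vect := {ffun conf d S -> C}.
Implicit Types (a b : obs R d S) (v : vect).

Lemma apply_obs0 a : apply_obs a 0 = 0.
Proof. by apply/ffunP => s; rewrite !ffunE big1 // => t _; rewrite ffunE mulr0. Qed.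

Lemma apply_obsZ a (z : C) v :
  apply_obs a [ffun s => z * v s] = [ffun s => z * apply_obs a v s].
Proof.
apply/ffunP => s; rewrite !ffunE mulr_sumr.
by apply: eq_bigr => t _; rewrite ffunE mulrCA.
Qed.

Lemma apply_obsD a b v : apply_obs (a + b) v = apply_obs a v + apply_obs b v.
Proof.
apply/ffunP => s; rewrite !ffunE -big_split /=.
by apply: eq_bigr => t _; rewrite ffunE mulrDl.
Qed.

Lemma apply_obsN a v : apply_obs (- a) v = [ffun s => -1 * apply_obs a v s].
Proof.
apply/ffunP => s; rewrite !ffunE mulr_sumr.
by apply: eq_bigr => t _; rewrite ffunE mulN1r mulNr.
Qed.

Lemma apply_mulo a b v : apply_obs (Defs.mulo a b) v = apply_obs a (apply_obs b v).
Proof.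
apply/ffunP => s; rewrite !ffunE.
under eq_bigr do rewrite ffunE mulr_suml.
rewrite exchange_big /=; apply: eq_bigr => r _.
by rewrite ffunE mulr_sumr; apply: eq_bigr => t _; rewrite mulrA.
Qed.

(* Bounding the kernel column by column shows that the defining supremum is finite. *)
Lemma vnorm_apply_le_columns a v :
  vnorm (apply_obs a v) <= vnorm v * \sum_t vnorm [ffun s => a (s, t)].
Proof.
have -> : apply_obs a v = \sum_t [ffun s => v t * a (s, t)].
  by apply/ffunP => s; rewrite ffunE sum_ffunE; apply: eq_bigr => t _; rewrite ffunE mulrC.
apply: le_trans (vnorm_sum _ _ _) _; rewrite mulr_sumr ler_sum // => t _.
have := vnormZ (v t) [ffun s => a (s, t)].
rewrite (_ : [ffun s => v t * _ s] = [ffun s => v t * a (s, t)]) => [->|].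
  by rewrite ler_wpM2r ?vnorm_ge0 ?cabs_le_vnorm.
by apply/ffunP => s; rewrite !ffunE.
Qed.

Lemma opnorm_has_ubound a :
  has_ubound [set vnorm (apply_obs a v) | v in [set v | vnorm v <= 1]].
Proof.
exists (\sum_t vnorm [ffun s => a (s, t)]) => _ [v /= v1 <-].
apply: le_trans (vnorm_apply_le_columns a v) _.
by rewrite ler_piMl // sumr_ge0 // => t _; exact: vnorm_ge0.
Qed.

Lemma opnorm_ge0 a : 0 <= opnorm a.
Proof.
apply: (ub_le_sup (opnorm_has_ubound a)); exists 0; last by rewrite apply_obs0 vnorm0.
by rewrite /= vnorm0.
Qed.

Lemma opnorm_le a M : 0 <= M ->
  (forall v, vnorm (apply_obs a v) <= M * vnorm v) -> opnorm a <= M.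
Proof.
move=> M0 aM; apply: ge_sup.
  by exists (vnorm (apply_obs a 0)), 0 => //=; rewrite vnorm0.
by move=> _ [v /= v1 <-]; apply: le_trans (aM v) _; rewrite ler_piMr.
Qed.

Lemma vnorm_apply_le a v : vnorm (apply_obs a v) <= opnorm a * vnorm v.
Proof.
have [v0|vN0] := eqVneq (vnorm v) 0.
  by have := vnorm_apply_le_columns a v; rewrite v0 mul0r mulr0.
have v_gt0 : 0 < vnorm v by rewrite lt_def vN0 vnorm_ge0.
pose k : C := ((vnorm v)^-1)%:C%C.
have cabs_k : cabs k = (vnorm v)^-1 by rewrite cabs_real // invr_ge0 vnorm_ge0.
have : vnorm (apply_obs a [ffun s => k * v s]) <= opnorm a.
  apply: (ub_le_sup (opnorm_has_ubound a)); exists [ffun s => k * v s] => //=.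
  by rewrite vnormZ cabs_k mulVf.
by rewrite apply_obsZ vnormZ cabs_k -ler_pdivrMr // mulrC.
Qed.

Lemma opnorm0 : opnorm (0 : obs R d S) = 0.
Proof.
apply/eqP; rewrite eq_le opnorm_ge0 andbT; apply: opnorm_le => // v.
have -> : apply_obs 0 v = 0.
  by apply/ffunP => s; rewrite !ffunE big1 // => t _; rewrite ffunE mul0r.
by rewrite vnorm0 mul0r.
Qed.

Lemma opnormD a b : opnorm (a + b) <= opnorm a + opnorm b.
Proof.
apply: opnorm_le => [|v]; first by rewrite addr_ge0 ?opnorm_ge0.
rewrite apply_obsD mulrDl; apply: le_trans (vnormD _ _) _.
by apply: lerD; exact: vnorm_apply_le.
Qed.

Lemma opnormN a : opnorm (- a) = opnorm a.
Proof.
have le_opp b : opnorm (- b) <= opnorm b.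
  apply: opnorm_le => [|v]; first exact: opnorm_ge0.
  by rewrite apply_obsN vnormZ cabsN1 mul1r vnorm_apply_le.
apply/eqP; rewrite eq_le; apply/andP; split; first exact: le_opp.
by have := le_opp (- a); rewrite opprK.
Qed.

Lemma opnorm_sum (J : Type) (r : seq J) (P : pred J) (F : J -> obs R d S) :
  opnorm (\sum_(j <- r | P j) F j) <= \sum_(j <- r | P j) opnorm (F j).
Proof.
elim/big_ind2: _ => [|a1 x1 a2 x2 le1 le2|//]; first by rewrite opnorm0.
by apply: le_trans (opnormD _ _) _; exact: lerD.
Qed.

Lemma opnormM a b : opnorm (Defs.mulo a b) <= opnorm a * opnorm b.
Proof.
apply: opnorm_le => [|v]; first by rewrite mulr_ge0 ?opnorm_ge0.
rewrite apply_mulo -mulrA; apply: le_trans (vnorm_apply_le _ _) _.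
by rewrite ler_wpM2l ?opnorm_ge0 // vnorm_apply_le.
Qed.

Lemma opnorm_commo a b : opnorm (commo a b) <= 2 * (opnorm a * opnorm b).
Proof.
rewrite /commo; apply: le_trans (opnormD _ _) _; rewrite opnormN.
by have := opnormM a b; have := opnormM b a; rewrite [opnorm b * _]mulrC; lra.
Qed.

End OperatorNorm.

Section Glue.
Variables (d : nat) (S T : {fset site}) (H : (S `<=` T)%fset).

Definition glue (t : conf d T) (s : conf d S) : conf d T :=
  [ffun x : T => if (insub (val x) : option S) is Some y then s y else t x].

Lemma restr_glue t s : restr H (glue t s) = s.
Proof.
apply/ffunP => y; rewrite !ffunE /=.
case: insubP => [u _ uy|]; last by rewrite (valP y).
by congr (s _); apply: val_inj.
Qed.

Lemma agree_offC (s t : conf d T) : agree_off S s t = agree_off S t s.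
Proof. by apply/forallP/forallP => st x; move: (st x); rewrite eq_sym. Qed.

Lemma agree_off_glue t s : agree_off S t (glue t s).
Proof.
apply/forallP => x; apply/implyP => xS; rewrite ffunE.
by case: insubP => [u xS'|] //; rewrite (negbTE xS) in xS'.
Qed.

Lemma glue_restr t t' : agree_off S t t' -> glue t (restr H t') = t'.
Proof.
move=> /forallP tt'; apply/ffunP => x; rewrite !ffunE.
case: insubP => [u _ ux|xS]; last by move: (tt' x); rewrite xS => /eqP.
by rewrite ffunE; congr (t' _); apply: val_inj.
Qed.

Lemma glue_glue t s' s : glue (glue t s') s = glue t s.
Proof. by apply/ffunP => x; rewrite !ffunE; case: insubP. Qed.

Lemma sum_agree_off (V : nmodType) (t : conf d T) (F : conf d T -> V) :
  \sum_(t' | agree_off S t t') F t' = \sum_s F (glue t s).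
Proof.
rewrite (reindex_onto (glue t) (restr H)) => [|t']; last exact: glue_restr.
by apply: eq_bigl => s; rewrite agree_off_glue restr_glue eqxx.
Qed.

Lemma sum_glue (R : pzRingType) (F : conf d T -> R) :
  \sum_t \sum_s F (glue t s) = #|conf d S|%:R * \sum_t F t.
Proof.
transitivity (\sum_t \sum_t' (agree_off S t t')%:R * F t').
  apply: eq_bigr => t _; rewrite -sum_agree_off [RHS](bigID (agree_off S t)) /=.
  rewrite [X in _ = _ + X]big1 ?addr0 => [|t' /negbTE ->]; last by rewrite mul0r.
  by apply: eq_bigr => t' ->; rewrite mul1r.
rewrite exchange_big mulr_sumr; apply: eq_bigr => t' _; rewrite -mulr_suml.
congr (_ * _); rewrite (bigID (agree_off S t')) /= [X in _ + X]big1 ?addr0.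
  rewrite (eq_bigr (fun _ => 1)) => [|t]; last by rewrite agree_offC => ->.
  by rewrite (sum_agree_off t' (fun _ => 1)) sumr_const.
by move=> t; rewrite agree_offC => /negbTE ->.
Qed.

End Glue.

Section EmbeddingNorm.
Variables (R : realType) (d : nat) (S T : {fset site}) (H : (S `<=` T)%fset).
Local Notation C := (complex R).

Definition slice (v : {ffun conf d T -> C}) (t : conf d T) : {ffun conf d S -> C} :=
  [ffun s => v (glue t s)].

Lemma apply_embH (a : obs R d S) v t :
  apply_obs (embH H a) v t = apply_obs a (slice v t) (restr H t).
Proof.
rewrite !ffunE; transitivity (\sum_(t' | agree_off S t t') a (restr H t, restr H t') * v t').
  rewrite [LHS](bigID (agree_off S t)) /= [X in _ + X]big1 ?addr0.
    by apply: eq_bigr => t' tt'; rewrite ffunE /= tt' mulr1.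
  by move=> t' /negbTE tt'; rewrite ffunE /= tt' mulr0 mul0r.
by rewrite (sum_agree_off H); apply: eq_bigr => s _; rewrite restr_glue ffunE.
Qed.

(* Summing squared norms of slices over all t counts every configuration #|conf S|
   times, and a acts slice by slice. *)
Lemma vnorm_apply_embH_le (a : obs R d S) v :
  vnorm (apply_obs (embH H a) v) <= opnorm a * vnorm v.
Proof.
have [t0 _|T_empty] := pickP (fun _ : conf d T => true); last first.
  by rewrite /vnorm big_pred0 ?sqrtr0 ?mulr_ge0 ?opnorm_ge0 ?vnorm_ge0.
have N_gt0 : 0 < #|conf d S|%:R :> R by rewrite ltr0n; apply/card_gt0P; exists (restr H t0).
have slice_apply t : slice (apply_obs (embH H a) v) t = apply_obs a (slice v t).
  apply/ffunP => s; rewrite [LHS]ffunE apply_embH restr_glue.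
  by congr (apply_obs a _ s); apply/ffunP => s'; rewrite !ffunE glue_glue.
have vnorm_slices (w : {ffun conf d T -> C}) :
    #|conf d S|%:R * vnorm w ^+ 2 = \sum_t vnorm (slice w t) ^+ 2.
  by rewrite vnorm_sqr -(sum_glue H); apply: eq_bigr => t _; rewrite vnorm_sqr;
    apply: eq_bigr => s _; rewrite ffunE.
rewrite -ler_sqr ?nnegrE ?mulr_ge0 ?opnorm_ge0 ?vnorm_ge0 //.
rewrite -(ler_pM2l N_gt0) exprMn [in X in _ <= X]mulrCA !vnorm_slices mulr_sumr ler_sum // => t _.
rewrite slice_apply -exprMn ler_sqr ?nnegrE ?mulr_ge0 ?opnorm_ge0 ?vnorm_ge0 //.
exact: vnorm_apply_le.
Qed.

End EmbeddingNorm.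

Lemma opnorm_emb (R : realType) (d : nat) (S T : {fset site}) (a : obs R d S) :
  opnorm (emb T a) <= opnorm a.
Proof.
rewrite /emb; case: {-}_ / idP => [H|_]; last by rewrite opnorm0 opnorm_ge0.
by apply: opnorm_le; [exact: opnorm_ge0 | exact: vnorm_apply_embH_le].
Qed.

Lemma opnorm_comm_int (R : realType) (d : nat) (h h' : interaction R d) (S : {fset site}) :
  opnorm (comm_int h h' S) <=
  \sum_(S1 <- fpowerset S)
    \sum_(S2 <- fpowerset S | ((S1 `|` S2)%fset == S) && ((S1 `&` S2)%fset != fset0))
      2 * (opnorm (h S1) * opnorm (h' S2)).
Proof.
apply: le_trans (opnorm_sum _ _ _) _; apply: ler_sum => S1 _.
apply: le_trans (opnorm_sum _ _ _) _; apply: ler_sum => S2 _.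
apply: le_trans (opnorm_commo _ _) _.
by rewrite ler_wpM2l // ler_pM ?opnorm_ge0 ?opnorm_emb.
Qed.

Section FinsetSums.
Variables (T : choiceType) (R : numDomainType).
Implicit Types (U S : {fset T}) (P : seq {fset T}).

(* The pair (S1, S2) only occurs for S = S1 `|` S2. *)
Lemma sum_covering_pairs_le (A : {fset {fset T}}) U (G : {fset T} -> {fset T} -> R) :
  (forall S, S \in A -> (S `<=` U)%fset) -> (forall S1 S2, 0 <= G S1 S2) ->
  \sum_(S <- A) \sum_(S1 <- fpowerset S)
     \sum_(S2 <- fpowerset S | ((S1 `|` S2)%fset == S) && ((S1 `&` S2)%fset != fset0))
       G S1 S2
  <= \sum_(S1 <- fpowerset U) \sum_(S2 <- fpowerset U | (S1 `&` S2)%fset != fset0) G S1 S2.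
Proof.
move=> AU G_ge0.
have widen S : S \in A ->
    \sum_(S1 <- fpowerset S)
      \sum_(S2 <- fpowerset S | ((S1 `|` S2)%fset == S) && ((S1 `&` S2)%fset != fset0))
        G S1 S2
  = \sum_(S1 <- fpowerset U) \sum_(S2 <- fpowerset U)
      (if ((S1 `|` S2)%fset == S) && ((S1 `&` S2)%fset != fset0) then G S1 S2 else 0).
  move=> SA; have sub_U : (fpowerset S `<=` fpowerset U)%fset by rewrite fpowersetS AU.
  transitivity (\sum_(S1 <- fpowerset S) \sum_(S2 <- fpowerset U)
      (if ((S1 `|` S2)%fset == S) && ((S1 `&` S2)%fset != fset0) then G S1 S2 else 0)).
    apply: eq_bigr => S1 _; rewrite big_mkcond; apply: big_fset_incl => // S2 _.
    by rewrite fpowersetE => S2S; case: eqP => // eS; rewrite -eS fsubsetUr in S2S.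
  apply: big_fset_incl => // S1 _; rewrite fpowersetE => S1S.
  by apply: big1_fset => S2 _ _; case: eqP => // eS; rewrite -eS fsubsetUl in S1S.
rewrite big_seq (eq_bigr _ widen) -big_seq exchange_big /=; apply: ler_sum => S1 _.
rewrite exchange_big /= [X in _ <= X]big_mkcond /=; apply: ler_sum => S2 _.
case: ((S1 `&` S2)%fset != fset0); last by rewrite big1 // => S _; rewrite andbF.
under eq_bigr do rewrite andbT.
rewrite -big_mkcond /=; have [inA|notinA] := boolP ((S1 `|` S2)%fset \in A).
  rewrite (eq_bigl (pred1 (S1 `|` S2)%fset)) => [|S]; last by rewrite /= eq_sym.
  by rewrite (@fbig_pred1_inj _ _ _ _ _ _ id).
by rewrite big1_fset ?G_ge0 // => S SA /eqP eS; rewrite eS SA in notinA.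
Qed.

(* Each intersecting pair is charged to a common point z. *)
Lemma sum_meeting_pairs_le P U (n n' : {fset T} -> R) :
  {in P, forall S, (S `<=` U)%fset} -> (forall S, 0 <= n S) -> (forall S, 0 <= n' S) ->
  \sum_(S1 <- P) \sum_(S2 <- P | (S1 `&` S2)%fset != fset0) n S1 * n' S2
  <= \sum_(z <- U) (\sum_(S <- P | z \in S) n S) * (\sum_(S <- P | z \in S) n' S).
Proof.
move=> PU n_ge0 n'_ge0.
have -> : \sum_(z <- U) (\sum_(S <- P | z \in S) n S) * (\sum_(S <- P | z \in S) n' S) =
    \sum_(S1 <- P) \sum_(S2 <- P) \sum_(z <- U | (z \in S1) && (z \in S2)) n S1 * n' S2.
  transitivity (\sum_(z <- U) \sum_(S1 <- P) \sum_(S2 <- P)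
      (if (z \in S1) && (z \in S2) then n S1 * n' S2 else 0)).
    apply: eq_bigr => z _; rewrite big_distrlr big_mkcond; apply: eq_bigr => S1 _ /=.
    by case: (z \in S1) => /=; [rewrite big_mkcond | rewrite big1].
  rewrite exchange_big; apply: eq_bigr => S1 _.
  by rewrite exchange_big; apply: eq_bigr => S2 _; rewrite [RHS]big_mkcond.
rewrite big_seq [X in _ <= X]big_seq; apply: ler_sum => S1 S1P.
rewrite [X in _ <= X](bigID (fun S2 => (S1 `&` S2)%fset != fset0)) /=.
apply: ler_wpDr; first by rewrite sumr_ge0 // => S2 _; rewrite sumr_ge0 // => z _; rewrite mulr_ge0.
apply: ler_sum => S2 /fset0Pn[z /fsetIP[zS1 zS2]].
have zU : z \in U by apply: (fsubsetP (PU _ S1P)).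
rewrite big_mkcond (bigD1_seq z) //= zS1 zS2 lerDl sumr_ge0 // => y _.
by case: ifP; rewrite ?mulr_ge0.
Qed.

Lemma sum_anchored_le P U (X : pred T) (n : {fset T} -> R) (z : T) :
  {in P, forall S, (S `<=` U)%fset} -> (forall S, 0 <= n S) ->
  {in P, forall S, (forall x, x \in S -> ~~ X x) -> n S = 0} ->
  \sum_(S <- P | z \in S) n S
  <= \sum_(x <- U | X x) \sum_(S <- P | (x \in S) && (z \in S)) n S.
Proof.
move=> PU n_ge0 anchored.
rewrite (exchange_big_dep (fun S => z \in S)) => [|x S _ /andP[]//] /=.
rewrite big_seq_cond [X in _ <= X]big_seq_cond; apply: ler_sum => S /andP[SP zS].
under [X in _ <= X]eq_bigl do rewrite zS andbT.
have [[x xS Xx]|no_anchor] := pselect (exists2 x, x \in S & X x); last first.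
  rewrite anchored // ?sumr_ge0 // => x xS; apply/negP => Xx; apply: no_anchor.
  by exists x.
have xU : x \in U by apply: (fsubsetP (PU _ SP)).
rewrite big_mkcond (bigD1_seq x) //= Xx xS lerDl sumr_ge0 // => y _.
by case: ifP.
Qed.

End FinsetSums.

Lemma ldistC (x y : site) : ldist x y = ldist y x.
Proof. by rewrite /ldist; congr maxn; lia. Qed.

Lemma ldist_triangle (x y z : site) : (ldist x y <= ldist x z + ldist z y)%N.
Proof. rewrite /ldist; lia. Qed.

Section InverseSquares.
Variable R : realFieldType.

Definition inv_sqr_succ (k : nat) : R := ((k.+1)%:R ^+ 2)^-1.

Lemma inv_sqr_succ_ge0 k : 0 <= inv_sqr_succ k.
Proof. by rewrite invr_ge0 exprn_ge0. Qed.

(* Telescoping: 1/(k+1)^2 <= 2/(k+1) - 2/(k+2). *)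
Lemma sum_inv_sqr_succ_iota m : \sum_(k <- iota 0 m) inv_sqr_succ k <= 2 - 2 / m.+1%:R.
Proof.
elim: m => [|m IH]; first by rewrite big_nil divr1 subrr.
rewrite -addn1 iotaD big_cat /= big_seq1 add0n; apply: le_trans (lerD IH (lexx _)) _.
rewrite /inv_sqr_succ addn1 -[m.+2%:R]natr1; set y : R := m.+1%:R.
have y1 : 1 <= y by rewrite ler1n.
rewrite -subr_ge0 (_ : _ - _ = (y - 1) / (y ^+ 2 * (y + 1))).
  by rewrite divr_ge0 ?mulr_ge0 ?exprn_ge0 //; lra.
by field; rewrite ?mulf_neq0 ?expf_neq0 ?gt_eqF //; lra.
Qed.

Lemma sum_le_uniq_subset (I : eqType) (s t : seq I) (F : I -> R) :
  uniq s -> uniq t -> {subset s <= t} -> (forall i, 0 <= F i) ->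
  \sum_(i <- s) F i <= \sum_(i <- t) F i.
Proof.
move=> us ut st F_ge0.
have st_perm : perm_eq s [seq i <- t | i \in s].
  apply: uniq_perm; rewrite ?filter_uniq // => i.
  by rewrite mem_filter; case: (boolP (i \in s)) => // /st ->.
rewrite (perm_big _ st_perm) big_filter big_mkcond ler_sum // => i _.
by case: (i \in s).
Qed.

Lemma sum_inv_sqr_succ_uniq (s : seq nat) : uniq s -> \sum_(k <- s) inv_sqr_succ k <= 2.
Proof.
move=> us; set m := (\max_(k <- s) k).+1.
apply: le_trans (sum_le_uniq_subset us (iota_uniq 0 m) _ inv_sqr_succ_ge0) _.
  move=> k ks; rewrite mem_iota add0n ltnS.
  exact: (@leq_bigmax_seq _ _ xpredT (fun k => k)).
by apply: le_trans (sum_inv_sqr_succ_iota m) _; rewrite lerBlDr lerDl divr_ge0.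
Qed.

Lemma sum_inv_sqr_succ_absz_uniq (t : seq int) :
  uniq t -> \sum_(n <- t) inv_sqr_succ `|n|%N <= 4.
Proof.
move=> ut; rewrite (bigID (fun n : int => 0 <= n)) /= (_ : 4 = 2 + 2 :> R); last by lra.
apply: lerD; rewrite -big_filter -(big_map (fun n : int => `|n|%N) xpredT inv_sqr_succ);
  apply: sum_inv_sqr_succ_uniq; rewrite map_inj_in_uniq ?filter_uniq // => a b;
  by rewrite !mem_filter => /andP[a0 _] /andP[b0 _]; move: a0 b0; lia.
Qed.

Lemma sum_inv_sqr_succ_site_uniq (s : seq site) (c : site) : uniq s ->
  \sum_(z <- s) inv_sqr_succ `|c.1 - z.1|%N * inv_sqr_succ `|c.2 - z.2|%N <= 16.
Proof.
move=> us; set s1 := undup [seq z.1 | z <- s].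
have -> : \sum_(z <- s) inv_sqr_succ `|c.1 - z.1|%N * inv_sqr_succ `|c.2 - z.2|%N =
    \sum_(a <- s1) \sum_(z <- s | z.1 == a)
      inv_sqr_succ `|c.1 - a|%N * inv_sqr_succ `|c.2 - z.2|%N.
  rewrite (exchange_big_dep xpredT) //=; apply: eq_big_seq => z zs.
  rewrite (eq_bigl (pred1 z.1)) => [|a]; last by rewrite /= eq_sym.
  rewrite -big_filter filter_pred1_uniq ?undup_uniq ?big_seq1 //.
  by rewrite mem_undup map_f.
apply: (@le_trans _ _ (\sum_(a <- s1) inv_sqr_succ `|c.1 - a|%N * 4)).
  apply: ler_sum => a _; rewrite -mulr_sumr ler_wpM2l ?inv_sqr_succ_ge0 //.
  rewrite -big_filter -(big_map (fun z : site => c.2 - z.2) xpredT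
    (fun n => inv_sqr_succ `|n|%N)).
  apply: sum_inv_sqr_succ_absz_uniq; rewrite map_inj_in_uniq ?filter_uniq //.
  move=> [z1 z2] [w1 w2]; rewrite !mem_filter /= => /andP[/eqP-> _] /andP[/eqP-> _].
  by move=> e; congr (_, _); lia.
rewrite -mulr_suml (_ : 16 = 4 * 4 :> R); last by lra.
rewrite ler_wpM2r // -(big_map (fun a : int => c.1 - a) xpredT
  (fun n => inv_sqr_succ `|n|%N)).
by apply: sum_inv_sqr_succ_absz_uniq; rewrite map_inj_uniq ?undup_uniq // => a b; lia.
Qed.

End InverseSquares.

Section ClassF.
Variable R : realType.
Implicit Types f g : nat -> R.

Lemma inF_ge0 f : inF f -> forall r, (0 < r)%N -> 0 <= f r.
Proof. by case=> f_gt0 _ _ r /f_gt0/ltW. Qed.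

Lemma inF_moment_bounded f p : inF f ->
  exists C : R, 0 < C /\ forall r, (0 < r)%N -> r%:R ^+ p * f r <= C.
Proof.
case=> f_gt0 f_mono /(_ p) /cvgrPdist_le /(_ 1 ltr01) [N _ tail].
exists (1 + N%:R ^+ p * f 1%N); split.
  by rewrite ltr_pwDl // mulr_ge0 ?exprn_ge0 // ltW // f_gt0.
move=> r r_gt0; case: (leqP N r) => [Nr|rN].
  have := tail r Nr; rewrite sub0r normrN => /(le_trans (ler_norm _)) /le_trans; apply.
  by rewrite lerDl mulr_ge0 ?exprn_ge0 // ltW // f_gt0.
apply: ler_wpDl => //; apply: ler_pM.
- by rewrite exprn_ge0.
- exact/ltW/f_gt0.
- by rewrite lerXn2r ?nnegrE // ler_nat ltnW.
- exact: f_mono.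
Qed.

(* f(1 + |c - z|) <= C (1 + |c - z|)^-4 <= C (1 + |c1 - z1|)^-2 (1 + |c2 - z2|)^-2. *)
Lemma inF_sum_ldist_bounded f : inF f ->
  exists K : R, 0 < K /\ forall (s : seq site) (c : site), uniq s ->
    \sum_(z <- s) f (1 + ldist c z)%N <= K.
Proof.
move=> fF; have [C [C_gt0 moment]] := inF_moment_bounded 4 fF.
exists (C * 16); split => [|s c us]; first by rewrite mulr_gt0.
apply: (@le_trans _ _ (\sum_(z <- s)
    C * (inv_sqr_succ R `|c.1 - z.1|%N * inv_sqr_succ R `|c.2 - z.2|%N))); last first.
  by rewrite -mulr_sumr ler_wpM2l ?(ltW C_gt0) // sum_inv_sqr_succ_site_uniq.
apply: ler_sum => z _; set a : R := `|c.1 - z.1|.+1%:R; set b : R := `|c.2 - z.2|.+1%:R.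
set l : R := (1 + ldist c z)%N%:R.
have [a1 b1] : 1 <= a /\ 1 <= b by rewrite !ler1n.
have [al bl] : a <= l /\ b <= l by rewrite !ler_nat !add1n !ltnS leq_maxl leq_maxr.
have ab_gt0 : 0 < a ^+ 2 * b ^+ 2 by rewrite mulr_gt0 // exprn_gt0 // (lt_le_trans ltr01).
rewrite /inv_sqr_succ -invfM -/a -/b ler_pdivlMr // mulrC.
apply: le_trans _ (moment (1 + ldist c z)%N isT); rewrite ler_wpM2r ?inF_ge0 //.
have l1 : 1 <= l := le_trans a1 al.
rewrite (_ : 4 = 2 + 2)%N // exprD -/l; apply: ler_pM; rewrite ?exprn_ge0 ?ler0n //;
  by rewrite ler_sqr ?nnegrE ?(le_trans ler01).
Qed.

Lemma inF_uphalf_decay f p : inF f -> (fun r => r%:R ^+ p * f (uphalf r)) @ \oo --> (0 : R).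
Proof.
case=> f_gt0 _ /(_ p) decay.
apply/cvgrPdist_le => e e_gt0.
have := decay => /cvgrPdist_le /(_ (e / 2 ^+ p)) [|N _ tail].
  by rewrite divr_gt0 // exprn_gt0.
exists (2 * N).+1 => // r /= Nr.
have [N_le r_le] : (N <= uphalf r)%N /\ (r <= 2 * uphalf r)%N by rewrite uphalfE -divn2; lia.
have fr_gt0 : 0 < f (uphalf r) by apply: f_gt0; rewrite uphalf_gt0; lia.
have := tail (uphalf r) N_le.
rewrite !sub0r !normrN !ger0_norm ?mulr_ge0 ?exprn_ge0 ?(ltW fr_gt0) //.
rewrite ler_pdivlMr ?exprn_gt0 // => /(le_trans _); apply.
rewrite mulrAC -exprMn ler_wpM2r ?(ltW fr_gt0) // lerXn2r ?nnegrE ?mulr_ge0 //.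
by rewrite -natrM ler_nat mulnC.
Qed.

Section Convolution.
Variables (f f' : nat -> R) (K K' : R).
Hypotheses (fF : inF f) (f'F : inF f').

Definition conv_weight (r : nat) : R := K' * f (uphalf r) + K * f' (uphalf r).

Lemma conv_weight_inF : 0 < K -> 0 < K' -> inF conv_weight.
Proof.
move=> K_gt0 K'_gt0.
have [f_gt0 f_mono _] := fF; have [f'_gt0 f'_mono _] := f'F.
split => [r r_gt0|r s r_gt0 rs|p].
- by rewrite addr_gt0 // mulr_gt0 // ?f_gt0 ?f'_gt0 // uphalf_gt0.
- by apply: lerD; (apply: ler_wpM2l; first exact: ltW);
    [apply: f_mono | apply: f'_mono]; rewrite ?uphalf_gt0 ?uphalf_leq.
- rewrite (_ : (fun r => _) = (fun r => K' * (r%:R ^+ p * f (uphalf r)) +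
      K * (r%:R ^+ p * f' (uphalf r)))); last by apply/funext => r; rewrite /conv_weight; ring.
  rewrite (_ : 0 = K' * 0 + K * 0 :> R); last by rewrite !mulr0 addr0.
  by apply: cvgD; apply: cvgM; [exact: cvg_cst | exact: inF_uphalf_decay fF
    | exact: cvg_cst | exact: inF_uphalf_decay f'F].
Qed.

(* One of |x - z|, |x' - z| is at least half of |x - x'|. *)
Lemma sum_conv_le :
  (forall (s : seq site) c, uniq s -> \sum_(z <- s) f (1 + ldist c z)%N <= K) ->
  (forall (s : seq site) c, uniq s -> \sum_(z <- s) f' (1 + ldist c z)%N <= K') ->
  forall (s : seq site) x x', uniq s ->
  \sum_(z <- s) f (1 + ldist x z)%N * f' (1 + ldist x' z)%N
    <= conv_weight (1 + ldist x x')%N.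
Proof.
move=> sum_f sum_f' s x x' us; have [_ f_mono _] := fF; have [_ f'_mono _] := f'F.
rewrite /conv_weight add1n uphalfE /= -add1n.
set a := f (1 + _)%N; set b := f' (1 + _)%N.
have [a_ge0 b_ge0] : 0 <= a /\ 0 <= b by rewrite (inF_ge0 fF) ?(inF_ge0 f'F).
apply: (@le_trans _ _ (\sum_(z <- s) (a * f' (1 + ldist x' z)%N + f (1 + ldist x z)%N * b))).
  apply: ler_sum => z _.
  have fz_ge0 : 0 <= f (1 + ldist x z)%N by rewrite (inF_ge0 fF).
  have f'z_ge0 : 0 <= f' (1 + ldist x' z)%N by rewrite (inF_ge0 f'F).
  have := ldist_triangle x x' z; rewrite [ldist z x']ldistC => tri.
  have [far|far'] : ((ldist x x')./2 <= ldist x z)%N \/ ((ldist x x')./2 <= ldist x' z)%N.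
    by rewrite -!divn2; lia.
  - by apply: ler_wpDr; rewrite ?mulr_ge0 // ler_wpM2r // f_mono // leq_add2l.
  - by apply: ler_wpDl; rewrite ?mulr_ge0 // ler_wpM2l // f'_mono // leq_add2l.
rewrite big_split /= -mulr_sumr -mulr_suml.
by have := sum_f s x us; have := sum_f' s x' us; nra.
Qed.

End Convolution.
End ClassF.

Section ExtendedSums.
Variables (R : realType) (T : choiceType).

Lemma fin_sum_le_esum (I : set T) (a : T -> \bar R) (F : {fset T}) (P : pred T) :
  (forall t, I t -> (0 <= a t)%E) -> (forall t, t \in F -> P t -> I t) ->
  (\sum_(t <- F | P t) a t <= \esum_(t in I) a t)%E.
Proof.
move=> a_ge0 FI; apply: esum_ge; exists [set` [fset t in F | P t]%fset].
  split=> [|t /=]; first exact: finite_fset.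
  by rewrite !inE /= => /andP[tF Pt]; apply: FI.
rewrite fsbig_finite ?set_fsetK; last exact: finite_fset.
by rewrite -big_fset_condE.
Qed.

Lemma esum_le_fin_sums (I : set T) (a : T -> R) (B : R) :
  (forall A : {fset T}, [set` A] `<=` I -> \sum_(t <- A) a t <= B) ->
  (\esum_(t in I) (a t)%:E <= B%:E)%E.
Proof.
move=> le_B; apply: ge_ereal_sup => _ [A [finA AI] <-].
rewrite fsbig_finite // sumEFin lee_fin le_B // => t /=.
by rewrite in_fset_set // inE => /AI.
Qed.

Lemma fin_double_sum_le_esum (I J : set T) (a : T -> T -> R) (F : {fset T}) :
  (forall t u, 0 <= a t u) ->
  \esum_(t in I) \esum_(u in J) (a t u)%:E \is a fin_num ->
  \sum_(t <- F | t \in I) \sum_(u <- F | u \in J) a t u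
    <= fine (\esum_(t in I) \esum_(u in J) (a t u)%:E).
Proof.
move=> a_ge0 fin; rewrite -lee_fin fineK // -sumEFin.
apply: le_trans (_ : (\sum_(t <- F | t \in I) \esum_(u in J) (a t u)%:E <= _)%E).
  apply: lee_sum => t _; rewrite -sumEFin.
  by apply: fin_sum_le_esum => [u _|u _]; rewrite ?lee_fin ?inE.
apply: fin_sum_le_esum => [t _|t _]; last by rewrite inE.
by apply: esum_ge0 => u _; rewrite lee_fin.
Qed.

End ExtendedSums.

Lemma ldist_le_diam (S : {fset site}) (x z : site) :
  x \in S -> z \in S -> (ldist x z <= diam S)%N.
Proof.
move=> xS zS; apply: leq_trans (leq_bigmax (FSetSub xS)).
exact: (leq_bigmax (F := fun y : S => ldist x (val y)) (FSetSub zS)).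
Qed.

Section Anchored.
Variables (R : realType) (d : nat) (X : set site) (h : interaction R d).
Variables (f : nat -> R) (M : R).
Hypotheses (fF : inF f) (h_le_M : forall x, (fsum f h x <= M%:E)%E).
Hypothesis h_vanish : forall S : {fset site}, (forall x, x \in S -> ~ X x) -> h S = 0.

Lemma fsum_ge0 x : (0 <= fsum f h x)%E.
Proof.
apply: esum_ge0 => S _; rewrite lee_fin divr_ge0 ?opnorm_ge0 //.
by rewrite (inF_ge0 fF).
Qed.

Lemma local_bound_ge0 : 0 <= M.
Proof. by rewrite -lee_fin; apply: le_trans (h_le_M (0, 0)); exact: fsum_ge0. Qed.

(* Every S through x and z has 1 + diam S >= 1 + |x - z|, so f(1 + diam S) <= f(1 + |x - z|). *)
Lemma sum_opnorm_through_le (P : {fset {fset site}}) (x z : site) :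
  \sum_(S <- P | (x \in S) && (z \in S)) opnorm (h S) <= M * f (1 + ldist x z)%N.
Proof.
have [f_gt0 f_mono _] := fF.
have weight_gt0 S : 0 < f (1 + diam S)%N by exact: f_gt0.
apply: (@le_trans _ _ (\sum_(S <- P | (x \in S) && (z \in S))
    f (1 + ldist x z)%N * (opnorm (h S) / f (1 + diam S)%N))).
  apply: ler_sum => S /andP[xS zS].
  rewrite mulrCA; apply: ler_peMr; first exact: opnorm_ge0.
  by rewrite ler_pdivlMr // mul1r f_mono // leq_add2l ldist_le_diam.
rewrite -mulr_sumr mulrC ler_wpM2r ?(inF_ge0 fF) //.
apply: (@le_trans _ _ (\sum_(S <- P | x \in S) opnorm (h S) / f (1 + diam S)%N)).
  rewrite [X in _ <= X]big_mkcond [X in X <= _]big_mkcond ler_sum // => S _.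
  by case: (x \in S); case: (z \in S); rewrite //= divr_ge0 ?opnorm_ge0 ?ltW.
rewrite -lee_fin -sumEFin; apply: le_trans (h_le_M x).
apply: fin_sum_le_esum => // S _.
by rewrite lee_fin divr_ge0 ?opnorm_ge0 ?ltW.
Qed.

Lemma sum_opnorm_at_le (U : {fset site}) (z : site) :
  \sum_(S <- fpowerset U | z \in S) opnorm (h S)
    <= M * \sum_(x <- U | x \in X) f (1 + ldist x z)%N.
Proof.
apply: le_trans (@sum_anchored_le _ _ (fpowerset U) U (fun x => x \in X)
  (fun S => opnorm (h S)) z _ _ _) _.
- by move=> S; rewrite fpowersetE.
- by move=> S; exact: opnorm_ge0.
- move=> S _ S_off_X; rewrite h_vanish ?opnorm0 // => x xS Xx.
  by have := S_off_X x xS; rewrite mem_set.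
by rewrite mulr_sumr ler_sum // => x _; exact: sum_opnorm_through_le.
Qed.

End Anchored.

Lemma sum_opnorm_comm_int_le (R : realType) (d : nat) (X X' : set site)
    (h h' : interaction R d) (f f' : nat -> R) (M M' : R) :
  inF f -> inF f' ->
  (forall x, (fsum f h x <= M%:E)%E) -> (forall x, (fsum f' h' x <= M'%:E)%E) ->
  (forall S : {fset site}, (forall x, x \in S -> ~ X x) -> h S = 0) ->
  (forall S : {fset site}, (forall x, x \in S -> ~ X' x) -> h' S = 0) ->
  forall (A : {fset {fset site}}) (U : {fset site}),
  (forall S, S \in A -> (S `<=` U)%fset) ->
  \sum_(S <- A) opnorm (comm_int h h' S) <=
    2 * (M * M') * \sum_(x <- U | x \in X) \sum_(x' <- U | x' \in X')
      \sum_(z <- U) f (1 + ldist x z)%N * f' (1 + ldist x' z)%N.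
Proof.
move=> fF f'F h_le_M h'_le_M' h_vanish h'_vanish A U AU.
have [M_ge0 M'_ge0] := (local_bound_ge0 fF h_le_M, local_bound_ge0 f'F h'_le_M').
apply: le_trans (ler_sum _ (fun S _ => opnorm_comm_int h h' S)) _.
apply: le_trans (sum_covering_pairs_le
  (G := fun S1 S2 => 2 * (opnorm (h S1) * opnorm (h' S2))) AU _) _.
  by move=> S1 S2; rewrite !mulr_ge0 ?opnorm_ge0.
under eq_bigr do rewrite -mulr_sumr.
rewrite -mulr_sumr -mulrA ler_wpM2l //.
apply: le_trans (@sum_meeting_pairs_le _ _ (fpowerset U) U
  (fun S => opnorm (h S)) (fun S => opnorm (h' S)) _ _ _) _.
- by move=> S; rewrite fpowersetE.
- by move=> S; exact: opnorm_ge0.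
- by move=> S; exact: opnorm_ge0.
apply: le_trans (_ : _ <= \sum_(z <- U) (M * \sum_(x <- U | x \in X) f (1 + ldist x z)%N) *
    (M' * \sum_(x' <- U | x' \in X') f' (1 + ldist x' z)%N)) _.
  apply: ler_sum => z _; apply: ler_pM;
    [ | | exact: sum_opnorm_at_le | exact: sum_opnorm_at_le];
    by apply: sumr_ge0 => S _; exact: opnorm_ge0.
rewrite le_eqVlt; apply/orP; left; apply/eqP.
under eq_bigr do rewrite mulrACA big_distrlr /=.
rewrite -mulr_sumr exchange_big; congr (_ * _); apply: eq_bigr => x _.
by rewrite exchange_big.
Qed.

Theorem lemmaA2 (R : realType) (d : nat) (X X' : set site) (h h' : interaction R d) :
  anchored X h -> anchored X' h' ->
  (forall f : nat -> R, inF f ->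
     (\esum_(x in X) \esum_(x' in X') (f (1 + ldist x x')%N)%:E < +oo)%E) ->
  (\esum_(S in [set: {fset site}]) (opnorm (comm_int h h' S))%:E < +oo)%E.
Proof.
move=> [[f [fF [M h_le_M]]] h_vanish] [[f' [f'F [M' h'_le_M']]] h'_vanish] summable.
have [K [K_gt0 sum_f_le]] := inF_sum_ldist_bounded fF.
have [K' [K'_gt0 sum_f'_le]] := inF_sum_ldist_bounded f'F.
pose g := conv_weight f f' K K'.
have gF : inF g := conv_weight_inF fF f'F K_gt0 K'_gt0.
have g_ge0 x x' : 0 <= g (1 + ldist x x')%N by rewrite (inF_ge0 gF).
set E := (\esum_(x in X) \esum_(x' in X') (g (1 + ldist x x')%N)%:E)%E.
have E_fin : E \is a fin_num.
  rewrite ge0_fin_numE; first exact: summable gF.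
  by apply: esum_ge0 => x _; apply: esum_ge0 => x' _; rewrite lee_fin.
apply: le_lt_trans (_ : _ <= (2 * (M * M') * fine E)%:E)%E (ltry _).
apply: esum_le_fin_sums => A _; pose U := (\bigcup_(S <- A) S)%fset.
apply: le_trans (sum_opnorm_comm_int_le fF f'F h_le_M h'_le_M' h_vanish h'_vanish
  (U := U) _) _; first by move=> S SA; apply: (@bigfcup_sup _ _ A S xpredT).
rewrite ler_wpM2l ?mulr_ge0 ?(local_bound_ge0 fF h_le_M) ?(local_bound_ge0 f'F h'_le_M') //.
apply: le_trans (_ : _ <= \sum_(x <- U | x \in X) \sum_(x' <- U | x' \in X')
  g (1 + ldist x x')%N) (fin_double_sum_le_esum _ g_ge0 E_fin).
by do 2 (apply: ler_sum => ? _); exact: sum_conv_le fF f'F sum_f_le sum_f'_le _ _ _ (fset_uniq U).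
Qed.
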